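(* Let $\Phi:\mathbb{R}\to\mathbb{R}$ be twice continuously differentiable on $[-1,1]$ with $\Phi'(-1)=-1$, $\Phi'(1)=1$, $\Phi''(-1)<1$ and $\Phi''(1)<1$. Then $\Phi''$ has a local maximiser in $(-1,1)$ (i.e. $\Phi'$ has at least one convex-concave turning point in $(-1,1)$). Moreover, if $\Phi'$ has no further turning point in $(-1,1)$, i.e. there is $w_*\in(-1,1)$ such that $\Phi''$ is nondecreasing on $[-1,w_*]$ and nonincreasing on $[w_*,1]$, and if $\Phi(-1)=\Phi(1)$, then $g_\Phi(w)>0$ for all $w\in(-1,1)$.
   Context: $g_\Phi(w):=\int_{-1}^{w}\big(v-\Phi'(v)\big)\,dv=\Phi(-1)-\Phi(w)+\tfrac12w^2-\tfrac12$. *)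

From Stdlib Require Import Reals Lra.
Open Scope R_scope.

Definition is_deriv_on (f f' : R -> R) (a b : R) : Prop :=
  forall x, a <= x <= b ->
  forall eps, 0 < eps -> exists delta, 0 < delta /\
    forall y, a <= y <= b -> y <> x -> Rabs (y - x) < delta ->
      Rabs ((f y - f x) / (y - x) - f' x) < eps.

Definition cont_on (f : R -> R) (a b : R) : Prop :=
  forall x, a <= x <= b ->
  forall eps, 0 < eps -> exists delta, 0 < delta /\
    forall y, a <= y <= b -> Rabs (y - x) < delta -> Rabs (f y - f x) < eps.

Definition C2_on (Phi d1 d2 : R -> R) (a b : R) : Prop :=
  is_deriv_on Phi d1 a b /\ is_deriv_on d1 d2 a b /\ cont_on d2 a b.

(* g_Phi(w) = int_{-1}^w (v - Phi'(v)) dv = Phi(-1) - Phi(w) + w^2/2 - 1/2 *)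
Definition g_Phi (Phi : R -> R) (w : R) : R :=
  Phi (-1) - Phi w + w ^ 2 / 2 - 1 / 2.

Definition local_max_at (h : R -> R) (w0 : R) : Prop :=
  exists delta, 0 < delta /\
    forall y, -1 <= y <= 1 -> Rabs (y - w0) < delta -> h y <= h w0.

(* Put h w := w - Phi'(w), so that h' = 1 - Phi'' and g_Phi' = h, with
   h(-1) = h(1) = 0 and g_Phi(-1) = 0.  By the mean value theorem Phi'' takes
   the value 1 somewhere, so its maximum on [-1,1] exceeds Phi''(+-1) and is
   attained inside.  If Phi'' is unimodal, the set where h' <= 0 is an
   interval; three applications of the mean value theorem then show that
   once h is <= 0 inside (-1,1) it stays <= 0 up to 1.  Since h'(1) > 0, h is
   even < 0 near 1.  So g_Phi increases from 0 while h > 0 and afterwards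
   strictly decreases to g_Phi(1) = 0, which gives g_Phi > 0 inside. *)

From Stdlib Require Import Reals Lra.
Open Scope R_scope.

Section Interval.

Variables a b : R.

Definition clamp (x : R) : R := Rmax a (Rmin b x).

Lemma clamp_id x : a <= x <= b -> clamp x = x.
Proof. intros. unfold clamp, Rmax, Rmin. repeat destruct Rle_dec; lra. Qed.

Lemma clamp_in x : a <= b -> a <= clamp x <= b.
Proof. intros. unfold clamp, Rmax, Rmin. repeat destruct Rle_dec; lra. Qed.

Lemma clamp_lipschitz x y : Rabs (clamp y - clamp x) <= Rabs (y - x).
Proof.
  unfold clamp, Rmax, Rmin. repeat destruct Rle_dec;
  unfold Rabs; repeat destruct Rcase_abs; lra.
Qed.

Lemma is_deriv_on_cont_on f f' : is_deriv_on f f' a b -> cont_on f a b.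
Proof.
  intros Hf x Hx eps Heps.
  destruct (Hf x Hx 1 Rlt_0_1) as [d [Hd Hq]].
  set (K := Rabs (f' x) + 1).
  assert (HK : 0 < K) by (unfold K; pose proof (Rabs_pos (f' x)); lra).
  exists (Rmin d (eps / K)). split.
  { apply Rmin_pos; [lra | apply Rdiv_lt_0_compat; lra]. }
  intros y Hy Hyx.
  destruct (Req_dec y x) as [-> | Hne].
  { rewrite Rminus_diag, Rabs_R0. lra. }
  pose proof (Rmin_l d (eps / K)). pose proof (Rmin_r d (eps / K)).
  specialize (Hq y Hy Hne ltac:(lra)).
  set (q := (f y - f x) / (y - x)) in *.
  assert (Hq_bound : Rabs q < K).
  { unfold K. pose proof (Rabs_triang_inv q (f' x)). lra. }
  replace (f y - f x) with (q * (y - x)) by (unfold q; field; lra).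
  rewrite Rabs_mult.
  assert (0 < Rabs (y - x)) by (apply Rabs_pos_lt; lra).
  apply Rlt_le_trans with (K * Rabs (y - x)).
  { apply Rmult_lt_compat_r; lra. }
  apply Rle_trans with (K * (eps / K)).
  { apply Rmult_le_compat_l; lra. }
  right; field; lra.
Qed.

Lemma continuity_pt_clamp f : cont_on f a b -> forall x, a <= x <= b ->
  continuity_pt (fun y => f (clamp y)) x.
Proof.
  intros Hf x Hx eps Heps. destruct (Hf x Hx eps Heps) as [d [Hd Hy]].
  exists d. split; [exact Hd |]. intros y [_ Hyx]. simpl in *. unfold R_dist in *.
  rewrite (clamp_id x Hx). apply Hy; [apply clamp_in; lra |].
  eapply Rle_lt_trans; [| exact Hyx].
  rewrite <- (clamp_id x Hx) at 1. apply clamp_lipschitz.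
Qed.

Lemma derivable_pt_lim_clamp f f' c : is_deriv_on f f' a b -> a < c < b ->
  derivable_pt_lim (fun y => f (clamp y)) c (f' c).
Proof.
  intros Hf Hc eps Heps.
  destruct (Hf c ltac:(lra) eps Heps) as [d [Hd Hq]].
  set (r := Rmin d (Rmin (c - a) (b - c))).
  assert (Hr : 0 < r) by (repeat apply Rmin_pos; lra).
  exists (mkposreal r Hr). intros h Hh0 Hh. simpl in Hh. unfold r in Hh.
  pose proof (Rmin_l d (Rmin (c - a) (b - c))).
  pose proof (Rmin_r d (Rmin (c - a) (b - c))).
  pose proof (Rmin_l (c - a) (b - c)). pose proof (Rmin_r (c - a) (b - c)).
  assert (a - c < h < b - c) by (unfold Rabs in Hh; destruct Rcase_abs in Hh; lra).
  rewrite (clamp_id c ltac:(lra)), (clamp_id (c + h) ltac:(lra)).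
  specialize (Hq (c + h) ltac:(lra) ltac:(lra)).
  replace (c + h - c) with h in Hq by ring. apply Hq. lra.
Qed.

(* The library's MVT needs two-sided continuity at the endpoints, which a
   function known only on [a,b] lacks; its clamped extension has it. *)
Lemma is_deriv_on_MVT f f' x y : is_deriv_on f f' a b -> a <= x -> x < y -> y <= b ->
  exists c, x < c < y /\ f y - f x = f' c * (y - x).
Proof.
  intros Hf Hx Hxy Hy.
  assert (Hcont : forall c, x <= c <= y -> continuity_pt (fun t => f (clamp t)) c).
  { intros c Hc. apply continuity_pt_clamp; [apply (is_deriv_on_cont_on _ _ Hf) | lra]. }
  assert (Hid : forall c, x <= c <= y -> continuity_pt id c).
  { intros. apply derivable_continuous_pt, derivable_pt_id. }
  destruct (MVT (fun t => f (clamp t)) id x y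
     (fun c P => exist _ (f' c) (derivable_pt_lim_clamp f f' c Hf ltac:(lra)))
     (fun c P => exist _ 1 (derivable_pt_lim_id c)) Hxy Hcont Hid) as [c [Hc E]].
  simpl in E. exists c. split; [exact Hc |].
  unfold id in E. rewrite (clamp_id x ltac:(lra)), (clamp_id y ltac:(lra)) in E.
  lra.
Qed.

Lemma cont_on_attains_max f : a <= b -> cont_on f a b ->
  exists m, a <= m <= b /\ forall y, a <= y <= b -> f y <= f m.
Proof.
  intros Hab Hf.
  destruct (continuity_ab_maj (fun y => f (clamp y)) a b Hab
              (continuity_pt_clamp f Hf)) as [m [Hm Hmab]].
  exists m. split; [exact Hmab |]. intros y Hy.
  rewrite <- (clamp_id y Hy), <- (clamp_id m Hmab). apply Hm. exact Hy.
Qed.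

End Interval.

Lemma is_deriv_on_ext f g f' a b : (forall x, f x = g x) ->
  is_deriv_on f f' a b -> is_deriv_on g f' a b.
Proof.
  intros Efg Hf x Hx eps Heps. destruct (Hf x Hx eps Heps) as [d [Hd Hq]].
  exists d. split; [exact Hd |]. intros y Hy Hyx Hd'. rewrite <- !Efg. auto.
Qed.

Lemma is_deriv_on_sub f g f' g' a b :
  is_deriv_on f f' a b -> is_deriv_on g g' a b ->
  is_deriv_on (fun x => f x - g x) (fun x => f' x - g' x) a b.
Proof.
  intros Hf Hg x Hx eps Heps.
  destruct (Hf x Hx (eps / 2) ltac:(lra)) as [df [Hdf Hqf]].
  destruct (Hg x Hx (eps / 2) ltac:(lra)) as [dg [Hdg Hqg]].
  exists (Rmin df dg). split; [apply Rmin_pos; lra |].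
  intros y Hy Hyx Hd.
  pose proof (Rmin_l df dg). pose proof (Rmin_r df dg).
  specialize (Hqf y Hy Hyx ltac:(lra)). specialize (Hqg y Hy Hyx ltac:(lra)).
  replace ((f y - g y - (f x - g x)) / (y - x) - (f' x - g' x))
    with (((f y - f x) / (y - x) - f' x) - ((g y - g x) / (y - x) - g' x))
    by (field; lra).
  eapply Rle_lt_trans; [apply Rabs_triang |]. rewrite Rabs_Ropp. lra.
Qed.

Lemma cont_on_const_sub c f a b : cont_on f a b -> cont_on (fun x => c - f x) a b.
Proof.
  intros Hf x Hx eps Heps. destruct (Hf x Hx eps Heps) as [d [Hd Hnear]].
  exists d. split; [exact Hd |]. intros y Hy Hyx.
  replace (c - f y - (c - f x)) with (- (f y - f x)) by ring.
  rewrite Rabs_Ropp. auto.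
Qed.

Lemma derivable_pt_lim_is_deriv_on p p' a b :
  (forall x, derivable_pt_lim p x (p' x)) -> is_deriv_on p p' a b.
Proof.
  intros Hp x _ eps Heps. destruct (Hp x eps Heps) as [[d Hd] Hq].
  exists d. split; [exact Hd |]. intros y _ Hyx Hd'.
  specialize (Hq (y - x) ltac:(lra) Hd'). simpl in Hq.
  replace (x + (y - x)) with y in Hq by ring. exact Hq.
Qed.

Lemma half_square_shift_derivable c x :
  derivable_pt_lim (fun w => w ^ 2 / 2 + c) x x.
Proof.
  replace x with (INR 2 * x ^ (2 - 1) * / 2 + 0) at 2 by (simpl; field).
  apply (derivable_pt_lim_plus (fun w => w ^ 2 / 2) (fun _ => c)).
  - apply (derivable_pt_lim_scal_right (fun w => w ^ 2)), derivable_pt_lim_pow.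
  - apply derivable_pt_lim_const.
Qed.

Lemma is_deriv_on_g_Phi Phi d1 a b : is_deriv_on Phi d1 a b ->
  is_deriv_on (g_Phi Phi) (fun w => w - d1 w) a b.
Proof.
  intros HPhi.
  apply (is_deriv_on_ext (fun w => (w ^ 2 / 2 + (Phi (-1) - 1 / 2)) - Phi w)).
  { intro; unfold g_Phi; ring. }
  apply is_deriv_on_sub; [| exact HPhi].
  apply derivable_pt_lim_is_deriv_on. intro. apply half_square_shift_derivable.
Qed.

Definition order_convex (P : R -> Prop) (a b : R) : Prop :=
  forall x y z, a <= x -> x <= y -> y <= z -> z <= b -> P x -> P z -> P y.

Lemma unimodal_superlevel_order_convex f a ws b c :
  (forall x y, a <= x -> x <= y -> y <= ws -> f x <= f y) ->
  (forall x y, ws <= x -> x <= y -> y <= b -> f y <= f x) ->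
  order_convex (fun x => c <= f x) a b.
Proof.
  intros Hinc Hdec x y z Hx Hxy Hyz Hz Hcx Hcz.
  destruct (Rle_dec y ws).
  - pose proof (Hinc x y Hx Hxy r). lra.
  - pose proof (Hdec y z ltac:(lra) Hyz Hz). lra.
Qed.

Lemma cont_on_interior_max f a b m :
  a <= b -> cont_on f a b -> f a < m -> f b < m ->
  (exists c, a <= c <= b /\ m <= f c) ->
  exists w0, a < w0 < b /\ forall y, a <= y <= b -> f y <= f w0.
Proof.
  intros Hab Hf Ha Hb [c [Hc Hmc]].
  destruct (cont_on_attains_max a b f Hab Hf) as [w0 [Hw0 Hmax]].
  pose proof (Hmax c Hc).
  exists w0. split; [| exact Hmax].
  split; apply Rnot_le_lt; intro; [replace w0 with a in * | replace w0 with b in *];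
    lra.
Qed.

Lemma deriv_interior_max f f' a b : a < b ->
  is_deriv_on f f' a b -> cont_on f' a b ->
  f' a < (f b - f a) / (b - a) -> f' b < (f b - f a) / (b - a) ->
  exists w0, a < w0 < b /\ forall y, a <= y <= b -> f' y <= f' w0.
Proof.
  intros Hab Hf Hf' Ha Hb.
  apply (cont_on_interior_max f' a b ((f b - f a) / (b - a))); try lra; try assumption.
  destruct (is_deriv_on_MVT a b f f' a b Hf ltac:(lra) Hab ltac:(lra)) as [c [Hc E]].
  exists c. split; [lra |]. right. rewrite E. field. lra.
Qed.

Section DerivativeSignPattern.

Variables a b : R.
Variables h h' : R -> R.
Hypothesis h_deriv : is_deriv_on h h' a b.
Hypothesis h_a : h a = 0.
Hypothesis h_b : h b = 0.

(* If h' <= 0 exactly on an interval, then h rises, falls, and rises back to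
   0, so it cannot become positive again after being <= 0. *)
Lemma nonpos_stays_nonpos :
  order_convex (fun x => h' x <= 0) a b ->
  forall x y, a < x -> x < y -> y < b -> h x <= 0 -> h y <= 0.
Proof.
  intros Hconv x y Hx Hxy Hy Hhx.
  apply Rnot_lt_le; intro Hhy.
  destruct (is_deriv_on_MVT a b h h' a x h_deriv ltac:(lra) Hx ltac:(lra))
    as [c0 [Hc0 E0]].
  destruct (is_deriv_on_MVT a b h h' x y h_deriv ltac:(lra) Hxy ltac:(lra))
    as [c1 [Hc1 E1]].
  destruct (is_deriv_on_MVT a b h h' y b h_deriv ltac:(lra) Hy ltac:(lra))
    as [c2 [Hc2 E2]].
  assert (H0 : h' c0 <= 0).
  { apply Rnot_lt_le; intro.
    assert (0 < h' c0 * (x - a)) by (apply Rmult_lt_0_compat; lra). lra. }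
  assert (H2 : h' c2 <= 0).
  { apply Rnot_lt_le; intro.
    assert (0 < h' c2 * (b - y)) by (apply Rmult_lt_0_compat; lra). lra. }
  assert (H1 : 0 < h' c1).
  { apply Rnot_le_lt; intro.
    assert (0 <= - h' c1 * (y - x)) by (apply Rmult_le_pos; lra). lra. }
  pose proof (Hconv c0 c1 c2 ltac:(lra) ltac:(lra) ltac:(lra) ltac:(lra) H0 H2).
  lra.
Qed.

Lemma neg_near_right_end :
  cont_on h' a b -> a < b -> 0 < h' b ->
  exists e, 0 < e /\ forall x, a <= x -> b - e < x -> x < b -> h x < 0.
Proof.
  intros Hcont Hab Hpos.
  destruct (Hcont b ltac:(lra) (h' b) Hpos) as [e [He Hnear]].
  exists e. split; [exact He |]. intros x Hx Hex Hxb.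
  destruct (is_deriv_on_MVT a b h h' x b h_deriv Hx Hxb ltac:(lra))
    as [c [Hc E]].
  assert (Hc' : 0 < h' c).
  { assert (Hcb : Rabs (c - b) < e) by (rewrite Rabs_left; lra).
    specialize (Hnear c ltac:(lra) Hcb).
    apply Rabs_def2 in Hnear. lra. }
  assert (0 < h' c * (b - x)) by (apply Rmult_lt_0_compat; lra). lra.
Qed.

End DerivativeSignPattern.

(* g rises while its derivative h is positive and then falls back to g b = 0;
   the strict fall near b is what makes g w > 0 also where h vanishes. *)
Lemma pos_between_roots g h a b :
  is_deriv_on g h a b -> g a = 0 -> g b = 0 ->
  (forall x y, a < x -> x < y -> y < b -> h x <= 0 -> h y <= 0) ->
  (exists e, 0 < e /\ forall x, a <= x -> b - e < x -> x < b -> h x < 0) ->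
  forall w, a < w < b -> 0 < g w.
Proof.
  intros Hg Ga Gb Hstay [e [He Hneg]] w Hw.
  destruct (Rle_dec (h w) 0) as [Hhw | Hhw].
  - set (m := (Rmax w (b - e) + b) / 2).
    pose proof (Rmax_l w (b - e)). pose proof (Rmax_r w (b - e)).
    assert (Rmax w (b - e) < b) by (apply Rmax_lub_lt; lra).
    assert (Hm : Rmax w (b - e) < m < b) by (unfold m; lra).
    destruct (is_deriv_on_MVT a b g h m b Hg ltac:(lra) ltac:(lra) ltac:(lra))
      as [c [Hc E]].
    destruct (is_deriv_on_MVT a b g h w m Hg ltac:(lra) ltac:(lra) ltac:(lra))
      as [c' [Hc' E']].
    assert (h c < 0) by (apply Hneg; lra).
    assert (h c' <= 0) by (apply (Hstay w c'); lra).
    assert (h c * (b - m) < 0) by (apply Rmult_neg_pos; lra).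
    assert (0 <= - h c' * (m - w)) by (apply Rmult_le_pos; lra).
    lra.
  - destruct (is_deriv_on_MVT a b g h a w Hg ltac:(lra) ltac:(lra) ltac:(lra))
      as [c [Hc E]].
    assert (0 < h c).
    { apply Rnot_le_lt; intro. apply Hhw, (Hstay c w); lra. }
    assert (0 < h c * (w - a)) by (apply Rmult_lt_0_compat; lra).
    lra.
Qed.

Theorem mainTheorem4 (Phi d1 d2 : R -> R) :
  C2_on Phi d1 d2 (-1) 1 ->
  d1 (-1) = -1 -> d1 1 = 1 -> d2 (-1) < 1 -> d2 1 < 1 ->
  (exists w0, -1 < w0 < 1 /\ local_max_at d2 w0) /\
  ((exists ws, -1 < ws < 1 /\
      (forall x y, -1 <= x -> x <= y -> y <= ws -> d2 x <= d2 y) /\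
      (forall x y, ws <= x -> x <= y -> y <= 1 -> d2 y <= d2 x)) ->
   Phi (-1) = Phi 1 ->
   forall w, -1 < w < 1 -> 0 < g_Phi Phi w).
Proof.
  intros [HPhi [Hd1 Hd2]] Hm1 Hp1 Hd2m Hd2p.
  set (h := fun x => x - d1 x).
  assert (Hh : is_deriv_on h (fun x => 1 - d2 x) (-1) 1).
  { apply is_deriv_on_sub; [| exact Hd1].
    apply derivable_pt_lim_is_deriv_on, derivable_pt_lim_id. }
  split.
  - destruct (deriv_interior_max d1 d2 (-1) 1 ltac:(lra) Hd1 Hd2) as [w0 [Hw0 Hmax]];
      [rewrite Hm1, Hp1; lra .. |].
    exists w0. split; [exact Hw0 |]. exists 1. split; [lra |].
    intros y Hy _. exact (Hmax y Hy).
  - intros [ws [Hws [Hinc Hdec]]] HPhi_ends.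
    assert (Hconv : order_convex (fun x => 1 - d2 x <= 0) (-1) 1).
    { intros x y z Hx Hxy Hyz Hz Hdx Hdz.
      enough (1 <= d2 y) by lra.
      apply (unimodal_superlevel_order_convex d2 (-1) ws 1 1 Hinc Hdec x y z); lra. }
    assert (h_m1 : h (-1) = 0) by (unfold h; rewrite Hm1; ring).
    assert (h_p1 : h 1 = 0) by (unfold h; rewrite Hp1; ring).
    apply (pos_between_roots _ h (-1) 1 (is_deriv_on_g_Phi Phi d1 _ _ HPhi)).
    + unfold g_Phi. field.
    + unfold g_Phi. rewrite HPhi_ends. field.
    + exact (nonpos_stays_nonpos _ _ _ _ Hh h_m1 h_p1 Hconv).
    + apply (neg_near_right_end (-1) 1 h _ Hh h_p1 (cont_on_const_sub 1 d2 _ _ Hd2));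
        cbv beta; lra.
Qed.
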